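(* Consider the group $G^2_3=\langle a,b,c\mid a^2=b^2=c^2=1,\ bca=acb,\ cab=bac,\ cba=abc\rangle$, which as a monoid (semigroup with identity) has the same presentation. Let $<$ be the deg-lex order on $\{a,b,c\}^*$ with $a<b<c$. Then the set $R'\subseteq\mathbb{F}\langle a,b,c\rangle$ consisting of (i) $x^2-1$ for $x\in\{a,b,c\}$; (ii) $bca-acb$; (iii) $cab-bac$; (iv) $cba-abc$; (v) $b(ac)^mb-(ca)^m$ for all integers $m\ge1$, generates the same ideal as the defining relations of $G^2_3$ (so $\mathbb{F}G^2_3=\mathbb{F}\langle a,b,c\mid R'\rangle$), and $R'$ is a Gröbner–Shirshov basis with respect to $<$.
   Context: $G^2_3$ is the Manturov $(2,3)$-group with $a=a_{12}$, $b=a_{13}$, $c=a_{23}$. The deg-lex order compares words first by length, then lexicographically using $a<b<c$. $\overline g$ denotes the $<$-largest monomial of $g\neq 0$; $g$ is monic if that monomial has coefficient $1$. Gröbner–Shirshov basis: for monic $f,g$, if $w=\overline f b=a'\overline g$ with $a',b\in X^*$ and $|\overline f|+|\overline g|>|w|$, then $(f,g)_w=fb-a'g$ (intersection composition); if $w=\overline f=a'\overline g b$, then $(f,g)_w=f-a'gb$ (inclusion composition). For monic $S$, $p$ is trivial modulo $(S,w)$ if $p=\sum\alpha_i u_is_iv_i$ with $\alpha_i\in\mathbb{F}$, $u_i,v_i$ words, $s_i\in S$, $u_i\overline{s_i}v_i<w$. A monic set $S$ is a Gröbner–Shirshov basis if every composition of elements of $S$ is trivial modulo $(S,w)$. *)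

(* Free associative algebra F<a,b,c> modelled as formal
   finite linear combinations of words (lists of terms), compared through
   their coefficient functions. *)
From mathcomp Require Import all_boot all_order all_algebra.
Set Implicit Arguments. Unset Strict Implicit. Unset Printing Implicit Defensive.
Import Order.TTheory GRing.Theory Num.Theory.
Local Open Scope ring_scope.

Definition letter := 'I_3.
Definition la : letter := @Ordinal 3 0 isT.
Definition lb : letter := @Ordinal 3 1 isT.
Definition lc : letter := @Ordinal 3 2 isT.

Definition word := seq letter.

(* lexicographic comparison (used for words of equal length) *)
Fixpoint lexlt (u v : word) : bool :=
  match u, v with
  | x :: u', y :: v' => (x < y)%N || ((x == y) && lexlt u' v')
  | _, _ => false
  end.

Definition wlt (u v : word) : bool :=
  (size u < size v)%N || ((size u == size v) && lexlt u v).
Definition wle (u v : word) : bool := (u == v) || wlt u v.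

Section NCPoly.
Variable F : fieldType.

Definition ncpoly := seq (F * word).

Definition coef (p : ncpoly) (w : word) : F := \sum_(t <- p | t.2 == w) t.1.

Definition scale (al : F) (p : ncpoly) : ncpoly := [seq (al * t.1, t.2) | t <- p].
Definition umul (u : word) (p : ncpoly) (v : word) : ncpoly :=
  [seq (t.1, u ++ t.2 ++ v) | t <- p].
Definition psub (p q : ncpoly) : ncpoly := p ++ scale (-1) q.

Definition lead_is (p : ncpoly) (w : word) : Prop :=
  coef p w != 0 /\ forall w', coef p w' != 0 -> wle w' w.

Definition monic (p : ncpoly) : Prop := exists w, lead_is p w /\ coef p w = 1.

Definition lincomb (l : seq (F * word * ncpoly * word)) : ncpoly :=
  flatten [seq let: (al, u, s, v) := t in scale al (umul u s v) | t <- l].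

Definition in_ideal (S : ncpoly -> Prop) (p : ncpoly) : Prop :=
  exists l : seq (F * word * ncpoly * word),
    (forall t, t \in l -> S t.1.2) /\ coef p =1 coef (lincomb l).

Definition trivial_mod (S : ncpoly -> Prop) (p : ncpoly) (w : word) : Prop :=
  exists l : seq (F * word * ncpoly * word),
    (forall t, t \in l ->
       let: (al, u, s, v) := t in
       S s /\ forall ws, lead_is s ws -> wlt (u ++ ws ++ v) w)
    /\ coef p =1 coef (lincomb l).

(* Groebner-Shirshov basis w.r.t. deg-lex: S monic and all intersection and
   inclusion compositions trivial *)
Definition GS_basis (S : ncpoly -> Prop) : Prop :=
  (forall f, S f -> monic f) /\
  forall f g wf wg, S f -> S g -> lead_is f wf -> lead_is g wg ->
    (forall (a' b w : word), w = wf ++ b -> w = a' ++ wg ->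
        (size w < size wf + size wg)%N ->
        trivial_mod S (psub (umul [::] f b) (umul a' g [::])) w) /\
    (forall (a' b : word), wf = a' ++ wg ++ b ->
        trivial_mod S (psub f (umul a' g b)) wf).

Definition binom (u v : word) : ncpoly := [:: (1, u); (-1, v)].

Definition R_G23 (p : ncpoly) : Prop :=
  (exists x : letter, p = binom [:: x; x] [::]) \/
  p = binom [:: lb; lc; la] [:: la; lc; lb] \/
  p = binom [:: lc; la; lb] [:: lb; la; lc] \/
  p = binom [:: lc; lb; la] [:: la; lb; lc].

Definition pw (m : nat) (u : word) : word := flatten (nseq m u).

Definition R'_G23 (p : ncpoly) : Prop :=
  R_G23 p \/
  (exists m : nat, (1 <= m)%N /\
     p = binom (lb :: pw m [:: la; lc] ++ [:: lb]) (pw m [:: lc; la])).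

End NCPoly.

From mathcomp Require Import all_boot all_algebra.
From mathcomp Require Import zify ring.
Set Implicit Arguments. Unset Strict Implicit. Unset Printing Implicit Defensive.
Import GRing.Theory.

(* Every element of R' is a binomial l - r with r < l, i.e. a rewriting rule
   l -> r on words.  For such a set, a composition is (up to sign) the difference
   of the two words obtained by rewriting its ambiguity w in the two possible
   ways; when these two words reduce to a common word, the telescoping sum of the
   rewriting steps, all of them below w, shows that the composition is trivial
   modulo (R', w).  So it suffices to join every critical pair.  Pairs between
   explicit rules are joined by computation; those involving the family
   b(ac)^m b -> (ca)^m follow from b(ca)^n ->* (ac)^n b, (ca)^n b ->* b(ac)^n and
   the cancellation (xy)^k (yx)^k ->* 1.  Finally b(ac)^m b - (ca)^m lies in the
   ideal of the defining relations by induction on m, using cab = bac. *)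

(** * The deg-lex order *)

Lemma lexlt_irr u : lexlt u u = false.
Proof. by elim: u => //= x u ->; rewrite ltnn eqxx. Qed.

Lemma lexlt_trans u v w : lexlt u v -> lexlt v w -> lexlt u w.
Proof.
elim: u v w => [|x u IH] [|y v] [|z w] //=.
case/orP=> [xy|/andP[/eqP<- uv]] /orP[yz|/andP[/eqP<- vw]].
- by rewrite (ltn_trans xy yz).
- by rewrite xy.
- by rewrite yz.
- by rewrite eqxx (IH _ _ uv vw) orbT.
Qed.

Lemma lexlt_catl p u v : lexlt (p ++ u) (p ++ v) = lexlt u v.
Proof. by elim: p => //= x p ->; rewrite ltnn eqxx. Qed.

Lemma lexlt_catr u v s t : size u = size v -> lexlt u v -> lexlt (u ++ s) (v ++ t).
Proof.
elim: u v => [|x u IH] [|y v] //= [uv] /orP[->//|/andP[/eqP-> lt_uv]].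
by rewrite eqxx (IH _ uv lt_uv) orbT.
Qed.

Lemma wlt_irr u : wlt u u = false.
Proof. by rewrite /wlt ltnn eqxx lexlt_irr. Qed.

Lemma wlt_trans u v w : wlt u v -> wlt v w -> wlt u w.
Proof.
rewrite /wlt => /orP[uv|/andP[/eqP-> lt_uv]] /orP[vw|/andP[/eqP vw' lt_vw]].
- by rewrite (ltn_trans uv vw).
- by rewrite -vw' uv.
- by rewrite vw.
- by rewrite vw' eqxx (lexlt_trans lt_uv lt_vw) orbT.
Qed.

Lemma wle_anti u v : wle u v -> wle v u -> u = v.
Proof.
rewrite /wle => /orP[/eqP//|uv] /orP[/eqP//|vu].
by have := wlt_trans uv vu; rewrite wlt_irr.
Qed.

Lemma wlt_ctx p q u v : wlt u v -> wlt (p ++ u ++ q) (p ++ v ++ q).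
Proof.
rewrite /wlt !size_cat => /orP[lt_uv|/andP[/eqP uv lt_uv]].
  by rewrite ltn_add2l ltn_add2r lt_uv.
by rewrite uv eqxx lexlt_catl lexlt_catr // orbT.
Qed.

Lemma pwS n u : pw n.+1 u = u ++ pw n u.
Proof. by []. Qed.

Lemma pwD m n u : pw (m + n) u = pw m u ++ pw n u.
Proof. by elim: m => // m IH; rewrite addSn !pwS IH catA. Qed.

Lemma pwSr n u : pw n.+1 u = pw n u ++ u.
Proof. by rewrite -addn1 pwD /pw /= cats0. Qed.

Lemma size_pw n u : size (pw n u) = (n * size u)%N.
Proof. by elim: n => // n IH; rewrite pwS size_cat IH mulSn. Qed.

Lemma cat_eq_cat (s t u v : word) : s ++ t = u ++ v ->
  (exists r, u = s ++ r /\ t = r ++ v) \/ (exists r, s = u ++ r /\ v = r ++ t).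
Proof.
elim: s u => [|x s IH] [|y u] /=.
- by move=> ->; left; exists [::].
- by move=> ->; left; exists (y :: u).
- by move=> <-; right; exists (x :: s).
- by case=> -> /IH [[r [-> ->]]|[r [-> ->]]]; [left|right]; exists r.
Qed.

Lemma split_pw (x y : letter) m (s t : word) : s ++ t = pw m [:: x; y] ->
  exists j k, (m = j + k /\ s = pw j [:: x; y] /\ t = pw k [:: x; y])%N \/
              (m = j + k.+1 /\ s = pw j [:: x; y] ++ [:: x] /\ t = y :: pw k [:: x; y])%N.
Proof.
elim: m s => [|m IH] [|z s] //=.
- by move=> ->; exists 0%N, 0%N; left.
- by move=> ->; exists 0%N, m.+1; left.
rewrite pwS => -[-> e]; case: s e => [|z' s] /=.
  by move=> ->; exists 0%N, m; right.
case=> -> /IH [j [k [[-> [-> ->]]|[-> [-> ->]]]]]; exists j.+1, k; [left|right].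
  by rewrite addSn pwS.
by rewrite addSn pwS.
Qed.

Notation ac n := (pw n [:: la; lc]).
Notation ca n := (pw n [:: lc; la]).
Notation bacb n := (lb :: ac n ++ [:: lb]).

Lemma split_bacb m (s t : word) : s ++ t = bacb m -> t != [::] ->
  (s = [::] /\ t = bacb m) \/
  (exists j k, m = (j + k)%N /\ s = lb :: ac j /\ t = ac k ++ [:: lb]) \/
  (exists j k, m = (j + k.+1)%N /\ s = lb :: ac j ++ [:: la] /\ t = lc :: ac k ++ [:: lb]).
Proof.
case: s => [|z s] /=; first by move=> ->; left.
case=> -> /cat_eq_cat [[r [/esym /split_pw [j [k [[-> [-> ->]]|[-> [-> ->]]]]] ->]]|[r [-> e]]] t0.
- by right; left; exists j, k.
- by right; right; exists j, k.
case: r e => [|z' r] e; last first.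
  by have := congr1 size e; rewrite /= size_cat; case: t t0 e => //= *; lia.
by right; left; exists m, 0%N; rewrite addn0 cats0; split.
Qed.

Lemma ac_b_inj n m t t' : ac n ++ lb :: t = ac m ++ lb :: t' -> n = m /\ t = t'.
Proof.
elim: n m => [|n IH] [|m] /=; [by case | by case | by case|].
by case=> /IH [-> ->].
Qed.

(** * The rewriting system *)

(* [rule_bacb 0] duplicates [rule_sq lb]: the family is uniform in [n]. *)
Inductive rule : word -> word -> Prop :=
| rule_sq x : rule [:: x; x] [::]
| rule_bca : rule [:: lb; lc; la] [:: la; lc; lb]
| rule_cab : rule [:: lc; la; lb] [:: lb; la; lc]
| rule_cba : rule [:: lc; lb; la] [:: la; lb; lc]
| rule_bacb n : rule (bacb n) (ca n).

Lemma rule_wlt l r : rule l r -> wlt r l.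
Proof.
rewrite /wlt; case=> [x|||| n] //=.
by rewrite size_cat !size_pw /= ltnS; apply/orP; left; lia.
Qed.

Inductive red : word -> word -> Prop :=
| red_refl u : red u u
| red_rule p l r q v : rule l r -> red (p ++ r ++ q) v -> red (p ++ l ++ q) v.

Lemma red_step p l r q u v : u = p ++ l ++ q -> rule l r -> red (p ++ r ++ q) v -> red u v.
Proof. by move=> ->; apply: red_rule. Qed.

Lemma rule_red l r : rule l r -> red l r.
Proof. by move=> lr; apply: (red_step (p := [::]) (q := [::]) _ lr); rewrite ?cats0 //; exact: red_refl. Qed.

Lemma red_trans u v w : red u v -> red v w -> red u w.
Proof. by elim=> // p l r q v' lr _ IH /IH; apply: red_rule. Qed.

Lemma red_ctx p q u v : red u v -> red (p ++ u ++ q) (p ++ v ++ q).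
Proof.
elim=> [u'|p' l r q' v' lr _ IH]; first exact: red_refl.
by apply: (red_step (p := p ++ p') (q := q' ++ q) _ lr); rewrite -!catA // in IH *.
Qed.

Lemma red_ctxl p u v : red u v -> red (p ++ u) (p ++ v).
Proof. by move/(red_ctx p [::]); rewrite !cats0. Qed.

Lemma red_ctxr q u v : red u v -> red (u ++ q) (v ++ q).
Proof. exact: red_ctx [::] q u v. Qed.

Definition joinable u v := exists w, red u w /\ red v w.

Lemma joinable_refl u : joinable u u.
Proof. by exists u; split; apply: red_refl. Qed.

Lemma joinable_sym u v : joinable u v -> joinable v u.
Proof. by case=> w [uw vw]; exists w. Qed.

Lemma red_joinable u v : red u v -> joinable u v.
Proof. by exists v; split; last exact: red_refl. Qed.

(* A leftmost rewriting strategy executable on explicit words, to decide the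
   joinability of critical pairs between explicit rules. *)
Definition rewrite_prefix (l r w : word) : option word :=
  if take (size l) w == l then Some (r ++ drop (size l) w) else None.

Definition rules_upto (k : nat) : seq (word * word) :=
  [:: ([:: la; la], [::]); ([:: lb; lb], [::]); ([:: lc; lc], [::]);
      ([:: lb; lc; la], [:: la; lc; lb]); ([:: lc; la; lb], [:: lb; la; lc]);
      ([:: lc; lb; la], [:: la; lb; lc])] ++ [seq (bacb n, ca n) | n <- iota 0 k].

Definition rewrite_head (w : word) : option word :=
  foldr (fun lr o => if rewrite_prefix lr.1 lr.2 w is Some w' then Some w' else o)
    None (rules_upto (size w)).

Fixpoint rewrite_once (w : word) : option word :=
  if rewrite_head w is Some w' then Some w' else
  if w is x :: t then omap (cons x) (rewrite_once t) else None.

Fixpoint normalize (k : nat) (w : word) : word :=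
  if k is k'.+1 then (if rewrite_once w is Some w' then normalize k' w' else w) else w.

Lemma rules_upto_rule k lr : lr \in rules_upto k -> rule lr.1 lr.2.
Proof.
rewrite mem_cat => /orP[|/mapP[n _ ->]]; last exact: rule_bacb.
by rewrite !inE => /orP[|/orP[|/orP[|/orP[|/orP[|]]]]] /eqP->; constructor.
Qed.

Lemma rewrite_head_red w w' : rewrite_head w = Some w' -> red w w'.
Proof.
rewrite /rewrite_head; elim: (rules_upto _) (@rules_upto_rule (size w)) => //= [[l r]] rs IH rs_rule.
rewrite /rewrite_prefix /=; case: eqP => [lw [<-]|_]; last first.
  by apply: IH => lr lr_rs; apply: rs_rule; rewrite inE lr_rs orbT.
apply: (red_step (p := [::]) _ (rs_rule _ (mem_head _ _))); last exact: red_refl.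
by rewrite /= -{1}(cat_take_drop (size l) w) lw.
Qed.

Lemma rewrite_once_red w w' : rewrite_once w = Some w' -> red w w'.
Proof.
elim: w w' => [|x w IH] w' //=; case e: rewrite_head => [w''|].
  by move=> [<-]; exact: rewrite_head_red.
by case: rewrite_once IH => //= t /(_ t erefl) wt [<-]; exact: (red_ctxl [:: x] wt).
Qed.

Lemma red_normalize k w : red w (normalize k w).
Proof.
elim: k w => [|k IH] w /=; first exact: red_refl.
case e: rewrite_once => [w'|]; last exact: red_refl.
exact: red_trans (rewrite_once_red e) (IH w').
Qed.

Lemma joinable_normalize k u v : normalize k u = normalize k v -> joinable u v.
Proof. by move=> e; exists (normalize k v); split; [rewrite -e|]; apply: red_normalize. Qed.

Ltac join_by_normalizing := apply: (@joinable_normalize 20); vm_compute; reflexivity.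

(** * Critical pairs *)

Lemma red_pw_cancel (x y : letter) k : red (pw k [:: x; y] ++ pw k [:: y; x]) [::].
Proof.
elim: k => [|k IH]; first exact: red_refl.
apply: (red_step (p := pw k [:: x; y] ++ [:: x]) (q := x :: pw k [:: y; x]) _ (rule_sq y)).
  by rewrite pwSr pwS -!catA.
apply: (red_step (p := pw k [:: x; y]) (q := pw k [:: y; x]) _ (rule_sq x)); last exact: IH.
by rewrite -!catA.
Qed.

Lemma red_b_ca n : red (lb :: ca n) (ac n ++ [:: lb]).
Proof.
elim: n => [|n IH]; first exact: red_refl.
apply: (red_step (p := [::]) (q := ca n) _ rule_bca) => //.
by have := red_ctxl [:: la; lc] IH; rewrite pwS -catA.
Qed.

Lemma red_ca_b n : red (ca n ++ [:: lb]) (lb :: ac n).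
Proof.
elim: n => [|n IH]; first exact: red_refl.
apply: (red_step (p := ca n) (q := [::]) _ rule_cab); first by rewrite pwSr -catA.
by have := red_ctxr [:: la; lc] IH; rewrite pwSr -catA.
Qed.

Lemma joinable_bacb_bacb j n : joinable (lb :: ac j ++ ca n) (ca j ++ ac n ++ [:: lb]).
Proof.
case: (leqP n j) => [le_nj|lt_jn].
- rewrite -(subnK le_nj) !pwD; exists (lb :: ac (j - n)); split.
    by have := red_ctx (lb :: ac (j - n)) [::] (red_pw_cancel la lc n); rewrite -!catA !cats0.
  apply: red_trans (red_ca_b (j - n)).
  by have := red_ctx (ca (j - n)) [:: lb] (red_pw_cancel lc la n); rewrite -!catA.
- rewrite -(subnKC (ltnW lt_jn)) !pwD; exists (ac (n - j) ++ [:: lb]); split.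
    apply: red_trans (red_b_ca (n - j)).
    by have := red_ctx [:: lb] (ca (n - j)) (red_pw_cancel la lc j); rewrite -!catA.
  by have := red_ctx [::] (ac (n - j) ++ [:: lb]) (red_pw_cancel lc la j); rewrite -!catA.
Qed.

Ltac solve_word_eqs := repeat (match goal with
 | H : _ :: _ = _ :: _ |- _ => injection H; clear H; intros
 | H : [::] = _ :: _ |- _ => discriminate H
 | H : _ :: _ = [::] |- _ => discriminate H
 | H : is_true false |- _ => discriminate H
 | H : _ ++ _ = [::] |- _ => move/nilP: H; rewrite cat_nilp => /andP[/nilP ? /nilP ?]
 | H : @eq nat _ _ |- _ => discriminate H
 | H : @eq letter ?a ?b |- _ => subst a || subst b || discriminate (congr1 val H) || clear H
 | H : ?a = ?b |- _ => (is_var a; subst a) || (is_var b; subst b)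
 end; simpl in * ).

Lemma rule_comparable_bacb l r m t t' : rule l r -> l ++ t = bacb m ++ t' ->
  [/\ l = bacb m, r = ca m & t = t'].
Proof.
case=> [x|||| n] /=; last by rewrite -!catA => -[] /ac_b_inj [-> ->].
all: by case: m => [|m] /= e; solve_word_eqs.
Qed.

Lemma joinable_cba_bacb n : joinable (lc :: ca n.+1) ([:: la; lb; lc; lc] ++ ac n ++ [:: lb]).
Proof.
exists (la :: ca n); split.
  by apply: (red_step (p := [::]) (q := la :: ca n) _ (rule_sq lc)) => //; exact: red_refl.
apply: (red_step (p := [:: la; lb]) (q := ac n ++ [:: lb]) _ (rule_sq lc)) => //.
exact: (red_ctxl [:: la] (rule_red (rule_bacb n))).
Qed.

Lemma joinable_bacb_bca j : joinable (lb :: ac j ++ [:: la; lc; lb]) (ca j ++ [:: lc; la]).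
Proof.
apply: red_joinable; have := rule_red (rule_bacb j.+1).
by rewrite !pwSr -!catA.
Qed.

Lemma joinable_bacb_cba j :
  joinable (lb :: (ac j ++ [:: la]) ++ [:: la; lb; lc]) (ca j.+1 ++ [:: la]).
Proof.
exists (ca j ++ [:: lc]); split.
  apply: (red_step (p := lb :: ac j) (q := [:: lb; lc]) _ (rule_sq la)); first by rewrite /= -!catA.
  by have := red_ctxr [:: lc] (rule_red (rule_bacb j)); rewrite /= -catA.
apply: (red_step (p := ca j ++ [:: lc]) (q := [::]) _ (rule_sq la)); first by rewrite pwSr -!catA.
by rewrite !cats0; exact: red_refl.
Qed.

Lemma overlap_joinable l1 r1 l2 r2 s o t : rule l1 r1 -> rule l2 r2 ->
  l1 = s ++ o -> l2 = o ++ t -> o != [::] -> joinable (s ++ r2) (r1 ++ t).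
Proof.
move=> lr1 lr2 e1 e2 o0; case: lr1 e1 => [x|||| m] e1.
1-4: case: lr2 e2 => [x'|||| [|n]] /= e2; case: s e1 => [|y [|z [|u [|v s]]]] /= e1; solve_word_eqs.
all: try solve [exact: joinable_refl | join_by_normalizing].
- exact: red_joinable (red_b_ca n.+1).
- exact: joinable_sym (red_joinable (rule_red (rule_bacb n.+2))).
- exact: joinable_cba_bacb.
move: (split_bacb (esym e1) o0) e2 => {e1}.
case=> [[-> ->]|[[j [k [-> [-> ->]]]]|[j [k [-> [-> ->]]]]]] e2.
  have [_ -> <-] := rule_comparable_bacb lr2 (etrans (cats0 l2) e2).
  by rewrite cats0; exact: joinable_refl.
all: case: lr2 e2 => [x'|||| n] /= e2; try case: k e2 => [|k] /= e2; solve_word_eqs.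
all: rewrite ?addn0 ?addn1.
- by rewrite cats0; exact: joinable_sym (red_joinable (red_ca_b j)).
- exact: joinable_bacb_bca.
- exact: joinable_bacb_bacb.
- exact: joinable_bacb_cba.
Qed.

Lemma inclusion_joinable l1 r1 l2 r2 s t : rule l1 r1 -> rule l2 r2 ->
  l1 = s ++ l2 ++ t -> joinable (s ++ r2 ++ t) r1.
Proof.
move=> lr1 lr2 e1; case: lr1 e1 => [x|||| m] e1.
1-4: case: lr2 e1 => [x'|||| [|n]] /= e1; case: s e1 => [|y [|z [|u [|v s]]]] /= e1; solve_word_eqs.
all: try solve [exact: joinable_refl | join_by_normalizing].
have l2t0 : l2 ++ t != [::] by case: lr2.
move: (split_bacb (esym e1) l2t0) => {e1}.
case=> [[-> e]|[[j [k [_ [_ e]]]]|[j [k [_ [_ e]]]]]].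
  have [_ -> ->] := rule_comparable_bacb lr2 (etrans e (esym (cats0 _))).
  by rewrite cats0; exact: joinable_refl.
all: case: lr2 e => [x'|||| n] /= e; try case: k e => [|k] /= e; solve_word_eqs.
Qed.


Section Spanned.
Variable F : fieldType.
Implicit Types (p q : ncpoly F) (P Q : word -> ncpoly F -> word -> Prop).
Local Open Scope ring_scope.

(* Both [in_ideal] and [trivial_mod] are instances, for different side conditions [P]. *)
Definition spanned P p :=
  exists l : seq (F * word * ncpoly F * word),
    (forall t, t \in l -> let: (_, u, s, v) := t in P u s v) /\ coef p =1 coef (lincomb l).

Lemma in_idealE S p : in_ideal S p <-> spanned (fun _ s _ => S s) p.
Proof. by split=> -[l [lS e]]; exists l; split=> // -[[[al u] s] v] /lS. Qed.

Lemma trivial_modE S p w : trivial_mod S p w =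
  spanned (fun u s v => S s /\ forall ws, lead_is s ws -> wlt (u ++ ws ++ v) w) p.
Proof. by []. Qed.

Lemma coef_cons c u p w : coef ((c, u) :: p) w = (u == w)%:R * c + coef p w.
Proof. by rewrite /coef big_cons /=; case: (u == w); rewrite ?mul1r ?mul0r ?add0r. Qed.

Lemma coef_cat p q w : coef (p ++ q) w = coef p w + coef q w.
Proof. by rewrite /coef big_cat. Qed.

Lemma coef_scale c p w : coef (scale c p) w = c * coef p w.
Proof.
elim: p => [|[c' u] p IH]; first by rewrite /coef !big_nil mulr0.
by rewrite /= !coef_cons IH mulrDr mulrCA.
Qed.

Lemma coef_umul_binom u l r v w :
  coef (umul u (binom F l r) v) w = (u ++ l ++ v == w)%:R - (u ++ r ++ v == w)%:R.
Proof. by rewrite /= !coef_cons /coef big_nil mulr1 mulrN1 addr0. Qed.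

Lemma coef_binom l r w : coef (binom F l r) w = (l == w)%:R - (r == w)%:R.
Proof. by rewrite !coef_cons /coef big_nil mulr1 mulrN1 addr0. Qed.

Lemma lincomb_cat (l1 l2 : seq (F * word * ncpoly F * word)) :
  lincomb (l1 ++ l2) = lincomb l1 ++ lincomb l2.
Proof. by rewrite /lincomb map_cat flatten_cat. Qed.

Lemma spanned_eq P p q : coef p =1 coef q -> spanned P q -> spanned P p.
Proof. by move=> pq [l [lP e]]; exists l; split=> // w; rewrite pq e. Qed.

Lemma spanned0 P p : coef p =1 (fun _ => 0) -> spanned P p.
Proof. by move=> p0; exists [::]; split=> // w; rewrite p0 /coef big_nil. Qed.

Lemma spanned_cat P p q : spanned P p -> spanned P q -> spanned P (p ++ q).
Proof.
move=> [l1 [l1P e1]] [l2 [l2P e2]]; exists (l1 ++ l2); split.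
  by move=> t; rewrite mem_cat => /orP[/l1P|/l2P].
by move=> w; rewrite lincomb_cat !coef_cat e1 e2.
Qed.

Lemma spanned_scale P c p : spanned P p -> spanned P (scale c p).
Proof.
move=> [l [lP e]].
exists [seq let: (al, u, s, v) := t in (c * al, u, s, v) | t <- l]; split.
  by move=> t /mapP[[[[al u] s] v] /lP + ->].
move=> w; rewrite coef_scale e; elim: l {lP e} => [|[[[al u] s] v] l IH] /=.
  by rewrite /coef big_nil mulr0.
by rewrite !coef_cat !coef_scale mulrDr IH mulrA.
Qed.

Lemma spanned_umul P u s v : P u s v -> spanned P (umul u s v).
Proof.
move=> Pusv; exists [:: (1, u, s, v)]; split; first by move=> t /[!inE] /eqP->.
by move=> w; rewrite /lincomb /= coef_cat coef_scale mul1r {3}/coef big_nil addr0.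
Qed.

Lemma spanned_trans P Q p :
  (forall u s v, P u s v -> spanned Q (umul u s v)) -> spanned P p -> spanned Q p.
Proof.
move=> PQ [l [lP e]]; apply: spanned_eq e _; elim: l lP => [|[[[al u] s] v] l IH] lP.
  by apply: spanned0 => w; rewrite /coef big_nil.
apply: spanned_cat; first by apply/spanned_scale/PQ/(lP _ (mem_head _ _)).
by apply: IH => t tl; apply: lP; rewrite inE tl orbT.
Qed.

End Spanned.

(** * Compositions *)

Section Compositions.
Variable F : fieldType.
Local Open Scope ring_scope.

Lemma lead_is_binom l r : wlt r l -> lead_is (binom F l r) l.
Proof.
move=> rl; have /negbTE rl' : r != l by apply: contraTneq rl => ->; rewrite wlt_irr.
split=> [|w]; first by rewrite coef_binom eqxx rl' subr0 oner_eq0.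
rewrite coef_binom /wle; case: (eqVneq l w) => [-> //|_].
by case: (eqVneq r w) => [<-|_]; rewrite ?rl ?orbT // subrr eqxx.
Qed.

Lemma lead_is_uniq (p : ncpoly F) w1 w2 : lead_is p w1 -> lead_is p w2 -> w1 = w2.
Proof. by move=> [p1 w1max] [p2 w2max]; apply: wle_anti; [apply: w2max | apply: w1max]. Qed.

Variable S : ncpoly F -> Prop.
Hypothesis S_rule : forall l r, rule l r -> S (binom F l r).

Lemma red_trivial u v w : red u v -> wlt u w -> trivial_mod S (binom F u v) w.
Proof.
rewrite trivial_modE; elim=> [u'|p l r q v' lr _ IH] uw.
  by apply: spanned0 => w'; rewrite coef_binom subrr.
apply: (@spanned_eq _ _ _ (umul p (binom F l r) q ++ binom F (p ++ r ++ q) v')).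
  by move=> w'; rewrite coef_cat coef_umul_binom !coef_binom; ring.
apply: spanned_cat; last exact/IH/(wlt_trans (wlt_ctx p q (rule_wlt lr))).
apply: spanned_umul; split=> [|ws]; first exact: S_rule.
by move/(lead_is_uniq (lead_is_binom (rule_wlt lr)))=> <-.
Qed.

Lemma joinable_trivial u v w :
  joinable u v -> wlt u w -> wlt v w -> trivial_mod S (binom F u v) w.
Proof.
move=> [z [uz vz]] uw vw.
apply: (@spanned_eq _ _ _ (binom F u z ++ scale (-1) (binom F v z))).
  by move=> w'; rewrite coef_cat coef_scale !coef_binom; ring.
by apply: spanned_cat; last apply: spanned_scale; exact: red_trivial.
Qed.

(* In an overlap [w = l1 t = s l2] the composition equals [s r2 - r1 t]. *)
Lemma intersection_trivial l1 r1 l2 r2 s t w : rule l1 r1 -> rule l2 r2 ->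
  w = l1 ++ t -> w = s ++ l2 -> (size w < size l1 + size l2)%N ->
  trivial_mod S (psub (umul [::] (binom F l1 r1) t) (umul s (binom F l2 r2) [::])) w.
Proof.
move=> lr1 lr2 e1 e2 overlap.
have [[o [_ tE]]|[o [l1E l2E]]] := cat_eq_cat (etrans (esym e1) e2).
  by move: overlap; rewrite e1 tE !size_cat; lia.
have o0 : o != [::].
  by apply: contraTneq overlap => o0; rewrite e2 l1E o0 cats0 !size_cat; lia.
apply: (@spanned_eq _ _ _ (binom F (s ++ r2) (r1 ++ t))).
  move=> w'; rewrite coef_cat coef_scale !coef_umul_binom coef_binom /= !cats0.
  by rewrite -e2 e1; ring.
apply: joinable_trivial; first exact: overlap_joinable lr1 lr2 l1E l2E o0.
  by rewrite e2; have := wlt_ctx s [::] (rule_wlt lr2); rewrite !cats0.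
by rewrite e1; exact: (wlt_ctx [::] t (rule_wlt lr1)).
Qed.

Lemma inclusion_trivial l1 r1 l2 r2 s t : rule l1 r1 -> rule l2 r2 -> l1 = s ++ l2 ++ t ->
  trivial_mod S (psub (binom F l1 r1) (umul s (binom F l2 r2) t)) l1.
Proof.
move=> lr1 lr2 e1.
apply: (@spanned_eq _ _ _ (binom F (s ++ r2 ++ t) r1)).
  by move=> w'; rewrite coef_cat coef_scale coef_umul_binom !coef_binom -e1; ring.
apply: joinable_trivial; first exact: inclusion_joinable lr1 lr2 e1.
  by rewrite e1; exact: wlt_ctx (rule_wlt lr2).
exact: rule_wlt.
Qed.

End Compositions.

Section RPrime.
Variable F : fieldType.
Local Open Scope ring_scope.

Lemma R'_G23_rule (p : ncpoly F) : R'_G23 p <-> exists l r, rule l r /\ p = binom F l r.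
Proof.
split=> [|[l [r [[x|||| [|m]] ->]]]].
- by case=> [[[x ->]|[->|[->|->]]]|[m [_ ->]]]; (do 2 eexists; split; [|reflexivity]); constructor.
- by left; left; exists x.
- by left; right; left.
- by left; right; right; left.
- by left; right; right; right.
- by left; left; exists lb.
- by right; exists m.+1.
Qed.

Lemma R'_G23_GS_basis : GS_basis (@R'_G23 F).
Proof.
have S_rule l r : rule l r -> R'_G23 (binom F l r) by move=> lr; apply/R'_G23_rule; exists l, r.
split=> [f /R'_G23_rule [l [r [lr ->]]]|f g wf wg].
  exists l; split; first exact: lead_is_binom (rule_wlt lr).
  by rewrite coef_binom eqxx; case: eqVneq (rule_wlt lr) => [->|_]; rewrite ?wlt_irr ?subr0.
move=> /R'_G23_rule [l1 [r1 [lr1 ->]]] /R'_G23_rule [l2 [r2 [lr2 ->]]].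
move=> /(lead_is_uniq (lead_is_binom F (rule_wlt lr1))) <-.
move=> /(lead_is_uniq (lead_is_binom F (rule_wlt lr2))) <-.
split=> [s t w e1 e2|s t e]; first exact: (intersection_trivial S_rule).
exact: (inclusion_trivial S_rule).
Qed.

(* b(ac)^(m+1)b - (ca)^(m+1) = ca (b(ac)^m b - (ca)^m) - (cab - bac)(ac)^m b *)
Lemma bacb_in_ideal m u v :
  spanned (fun _ s _ => R_G23 s) (umul u (binom F (bacb m) (ca m)) v).
Proof.
elim: m u v => [|m IH] u v; first by apply: spanned_umul; left; exists lb.
apply: (@spanned_eq _ _ _ (umul (u ++ [:: lc; la]) (binom F (bacb m) (ca m)) v ++
   scale (-1) (umul u (binom F [:: lc; la; lb] [:: lb; la; lc]) (ac m ++ lb :: v)))).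
  by move=> w; rewrite coef_cat coef_scale !coef_umul_binom /= -!catA /=; ring.
apply: spanned_cat; first exact: IH.
by apply/spanned_scale/spanned_umul; right; right; left.
Qed.

Lemma R'_G23_ideal (p : ncpoly F) : in_ideal (@R'_G23 F) p <-> in_ideal (@R_G23 F) p.
Proof.
rewrite !in_idealE; split; apply: spanned_trans => u s v.
  by case=> [Rs|[m [_ ->]]]; [exact: spanned_umul | exact: bacb_in_ideal].
by move=> Rs; apply: spanned_umul; left.
Qed.

End RPrime.

Theorem mainTheorem9 (F : fieldType) :
  (forall p : ncpoly F, in_ideal (@R'_G23 F) p <-> in_ideal (@R_G23 F) p) /\
  GS_basis (@R'_G23 F).
Proof. by split; [exact: R'_G23_ideal | exact: R'_G23_GS_basis]. Qed.
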